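(* Let $d\ge1$, let $0\le\theta\le1$, and consider instances encoded as bipolar vectors $(x_1,\dots,x_d)\in\{1,-1\}^d$. Let a finite nonempty set of $k$ rules be given, each rule having as premise a nonempty conjunction of literals $x_i$ or $\neg x_i$ ($1\le i\le d$) and as conclusion the target class with a rule certainty factor $c\in(\theta,1]$. (An instance matches a rule if $x_i=1$ for each positive literal $x_i$ in its premise and $x_i=-1$ for each negated literal $\neg x_i$ in its premise.) Then there exists a multi-channel model with $k$ channels such that for every instance, the model output $M_{out}$ is $>\theta$ if the instance matches at least one of the given rules, and $M_{out}=0$ otherwise.
   Context: The CF-combining function: for a finite list of real arguments in $[-1,1]$, split them into the nonnegative ones $a_1,a_2,\dots$ and the negative ones $b_1,b_2,\dots$, and set $f_{\rm cf}=f^+_{\rm cf}(a_1,a_2,\dots)+f^-_{\rm cf}(b_1,b_2,\dots)$ where $f^+_{\rm cf}(a_1,a_2,\dots)=1-\prod_i(1-a_i)$ and $f^-_{\rm cf}(b_1,b_2,\dots)=-1+\prod_j(1+b_j)$ (empty products equal $1$). A multi-channel model with $k$ channels has, for each channel $j=1,\dots,k$, an output weight $u_j\in[0,1]$, a bias $w_{j0}\in[-1,1]$ and input weights $w_{j1},\dots,w_{jd}\in[-1,1]$. On input $(x_1,\dots,x_d)$, channel $j$ has activation $\phi_j=f_{\rm cf}(w_{j0},w_{j1}x_1,\dots,w_{jd}x_d)$ and influence $\psi_j=u_j\phi_j$, and the model output is $M_{out}=f_{\rm cf}(\psi_1,\dots,\psi_k)$. *)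

From Stdlib Require Import Reals List.
Import ListNotations.
Open Scope R_scope.

Definition prodR (l : list R) : R := fold_right Rmult 1 l.

Definition is_nonneg (a : R) : bool := if Rle_dec 0 a then true else false.

Definition fcf_pos (l : list R) : R := 1 - prodR (map (fun a => 1 - a) l).
Definition fcf_neg (l : list R) : R := -1 + prodR (map (fun b => 1 + b) l).

Definition fcf (l : list R) : R :=
  fcf_pos (filter is_nonneg l) + fcf_neg (filter (fun a => negb (is_nonneg a)) l).

(* A multi-channel model with channels j = 0..k-1 and inputs i = 0..d-1
   (the paper's 1-based indices shifted by one). *)
Record model := Model {
  u  : nat -> R;
  w0 : nat -> R;
  w  : nat -> nat -> R
}.

Definition valid_model (k d : nat) (m : model) : Prop :=
  forall j, (j < k)%nat ->
    (0 <= u m j <= 1) /\ (-1 <= w0 m j <= 1) /\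
    (forall i, (i < d)%nat -> -1 <= w m j i <= 1).

Definition activation (d : nat) (m : model) (j : nat) (x : nat -> R) : R :=
  fcf (w0 m j :: map (fun i => w m j i * x i) (seq 0 d)).

Definition influence (d : nat) (m : model) (j : nat) (x : nat -> R) : R :=
  u m j * activation d m j x.

Definition M_out (k d : nat) (m : model) (x : nat -> R) : R :=
  fcf (map (fun j => influence d m j x) (seq 0 k)).

(* bipolar instance (x_0,...,x_{d-1}) in {1,-1}^d; values beyond d are irrelevant *)
Definition bipolar (d : nat) (x : nat -> R) : Prop :=
  forall i, (i < d)%nat -> x i = 1 \/ x i = -1.

(* A literal (i, true) stands for x_i, (i, false) for the negation of x_i. *)
Definition literal := (nat * bool)%type.

Record rule := Rule {
  premise : list literal;
  cf : R                    (* certainty factor of the conclusion (target class) *)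
}.

Definition lit_holds (x : nat -> R) (l : literal) : Prop :=
  x (fst l) = (if snd l then 1 else -1).

Definition matches (x : nat -> R) (r : rule) : Prop :=
  Forall (lit_holds x) (premise r).

Definition well_formed_rule (d : nat) (theta : R) (r : rule) : Prop :=
  premise r <> [] /\
  Forall (fun l : literal => (fst l < d)%nat) (premise r) /\
  theta < cf r <= 1.

From Stdlib Require Import Reals List Lra Lia Classical ClassicalEpsilon.
Import ListNotations.
Open Scope R_scope.

(* Channel j encodes rule j: bias 1, input weight 1 on a positive literal x_i,
   -1 on a negated literal, 0 on absent variables.  On a bipolar instance every
   argument of the activation lies in {-1, 0, 1} and includes the bias 1; a -1
   occurs exactly when some literal is violated.  Since f_cf saturates to 1 on a
   1 and to -1 on a -1, the activation is 1 on matching instances and 0 otherwise.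
   With output weight c_j the influences are c_j or 0, and f_cf of nonnegative
   arguments is at least their maximum and vanishes on zeros. *)

Lemma prodR_cons (a : R) (l : list R) : prodR (a :: l) = a * prodR l.
Proof. reflexivity. Qed.

Lemma prodR_unit_interval (l : list R) :
  (forall a, In a l -> 0 <= a <= 1) -> 0 <= prodR l <= 1.
Proof.
  induction l as [|a l IH]; intros Hl; rewrite ?prodR_cons; [cbn; lra|].
  assert (Ha := Hl a (or_introl eq_refl)).
  assert (Hp := IH (fun b Hb => Hl b (or_intror Hb))).
  nra.
Qed.

Lemma prodR_le_In (l : list R) (a : R) :
  (forall b, In b l -> 0 <= b <= 1) -> In a l -> prodR l <= a.
Proof.
  induction l as [|b l IH]; intros Hl Ha; [destruct Ha|].
  rewrite prodR_cons.
  assert (Hb := Hl b (or_introl eq_refl)).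
  assert (Hl' : forall c, In c l -> 0 <= c <= 1) by (intros c Hc; apply Hl; right; exact Hc).
  assert (Hp := prodR_unit_interval l Hl').
  destruct Ha as [<-|Ha]; [nra|].
  assert (IHa := IH Hl' Ha). nra.
Qed.

Lemma prodR_In_0 (l : list R) : In 0 l -> prodR l = 0.
Proof.
  induction l as [|a l IH]; intros Hl; [destruct Hl|].
  rewrite prodR_cons. destruct Hl as [->|Hl]; [ring|]. rewrite (IH Hl). ring.
Qed.

Lemma prodR_all_1 (l : list R) : (forall a, In a l -> a = 1) -> prodR l = 1.
Proof.
  induction l as [|a l IH]; intros Hl; [reflexivity|].
  rewrite prodR_cons, (Hl a (or_introl eq_refl)), IH; [ring|].
  intros b Hb; apply Hl; right; exact Hb.
Qed.

Lemma is_nonneg_spec (a : R) : is_nonneg a = true <-> 0 <= a.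
Proof. unfold is_nonneg; destruct (Rle_dec 0 a); split; easy. Qed.

Lemma fcf_of_nonneg (l : list R) :
  (forall a, In a l -> 0 <= a) -> fcf l = fcf_pos l.
Proof.
  intros Hl. unfold fcf.
  assert (Hsplit : filter is_nonneg l = l /\
                   filter (fun a => negb (is_nonneg a)) l = []).
  { induction l as [|a l IH]; [easy|].
    cbn. rewrite (proj2 (is_nonneg_spec a)) by (apply Hl; left; reflexivity).
    destruct IH as [-> ->]; [|easy]. intros b Hb; apply Hl; right; exact Hb. }
  destruct Hsplit as [-> ->]. unfold fcf_neg. cbn. ring.
Qed.

Lemma fcf_In_1_In_m1 (l : list R) : In 1 l -> In (-1) l -> fcf l = 0.
Proof.
  intros H1 Hm1. unfold fcf, fcf_pos, fcf_neg.
  rewrite !prodR_In_0; [ring| |].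
  - apply in_map_iff. exists (-1). split; [ring|].
    apply filter_In. split; [exact Hm1|].
    destruct (is_nonneg (-1)) eqn:E; [apply is_nonneg_spec in E; lra | reflexivity].
  - apply in_map_iff. exists 1. split; [ring|].
    apply filter_In. split; [exact H1|]. apply is_nonneg_spec. lra.
Qed.

Lemma fcf_In_1_nonneg (l : list R) :
  In 1 l -> (forall a, In a l -> 0 <= a) -> fcf l = 1.
Proof.
  intros H1 Hl. rewrite fcf_of_nonneg by exact Hl. unfold fcf_pos.
  rewrite prodR_In_0; [ring|].
  apply in_map_iff. exists 1. split; [ring | exact H1].
Qed.

Lemma fcf_ge_In (l : list R) (a : R) :
  (forall b, In b l -> 0 <= b <= 1) -> In a l -> a <= fcf l.
Proof.
  intros Hl Ha. rewrite fcf_of_nonneg by (intros b Hb; apply Hl, Hb). unfold fcf_pos.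
  assert (Hcompl : forall c, In c (map (fun b => 1 - b) l) -> 0 <= c <= 1).
  { intros c Hc. apply in_map_iff in Hc as [b [<- Hb]]. specialize (Hl b Hb). lra. }
  assert (Hle : prodR (map (fun b => 1 - b) l) <= 1 - a).
  { apply prodR_le_In; [exact Hcompl|]. apply in_map_iff. exists a. auto. }
  lra.
Qed.

Lemma fcf_all_0 (l : list R) : (forall a, In a l -> a = 0) -> fcf l = 0.
Proof.
  intros Hl. rewrite fcf_of_nonneg by (intros a Ha; rewrite (Hl a Ha); lra).
  unfold fcf_pos. rewrite prodR_all_1; [ring|].
  intros c Hc. apply in_map_iff in Hc as [a [<- Ha]]. rewrite (Hl a Ha). ring.
Qed.

Definition literal_eq_dec (l l' : literal) : {l = l'} + {l <> l'}.
Proof. repeat decide equality. Defined.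

Definition lit_weight (p : list literal) (i : nat) : R :=
  if in_dec literal_eq_dec (i, true) p then 1
  else if in_dec literal_eq_dec (i, false) p then -1 else 0.

Definition consistent (p : list literal) : Prop :=
  forall i, In (i, true) p -> ~ In (i, false) p.

Definition default_rule : rule := Rule [] 0.

(* An inconsistent premise is never matched, but lit_weight (which lets x_i win
   over its negation) would not detect its violation: such channels are muted. *)
Definition rule_model (rules : list rule) : model :=
  Model (fun j => let r := nth j rules default_rule in
                  if excluded_middle_informative (consistent (premise r)) then cf r else 0)
        (fun _ => 1)
        (fun j => lit_weight (premise (nth j rules default_rule))).

Lemma lit_weight_range (p : list literal) (i : nat) : -1 <= lit_weight p i <= 1.
Proof.
  unfold lit_weight.
  destruct (in_dec literal_eq_dec (i, true) p); [|destruct (in_dec literal_eq_dec (i, false) p)]; lra.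
Qed.

Lemma matches_consistent (x : nat -> R) (r : rule) :
  matches x r -> consistent (premise r).
Proof.
  intros Hm i Ht Hf. unfold matches in Hm. rewrite Forall_forall in Hm.
  assert (E1 := Hm _ Ht). assert (E2 := Hm _ Hf).
  unfold lit_holds in E1, E2; cbn in E1, E2. lra.
Qed.

Lemma lit_weight_mul_nonneg (x : nat -> R) (p : list literal) (i : nat) :
  Forall (lit_holds x) p -> 0 <= lit_weight p i * x i.
Proof.
  intros Hm. rewrite Forall_forall in Hm. unfold lit_weight.
  destruct (in_dec literal_eq_dec (i, true) p) as [Ht|_].
  { assert (E := Hm _ Ht). unfold lit_holds in E; cbn in E. rewrite E. lra. }
  destruct (in_dec literal_eq_dec (i, false) p) as [Hf|_]; [|lra].
  assert (E := Hm _ Hf). unfold lit_holds in E; cbn in E. rewrite E. lra.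
Qed.

Lemma lit_weight_mul_violated (x : nat -> R) (p : list literal) (i : nat) (b : bool) :
  consistent p -> In (i, b) p -> (x i = 1 \/ x i = -1) -> ~ lit_holds x (i, b) ->
  lit_weight p i * x i = -1.
Proof.
  intros Hc Hin Hx Hviol. unfold lit_holds in Hviol; cbn in Hviol. unfold lit_weight.
  destruct b.
  - destruct (in_dec literal_eq_dec (i, true) p) as [_|Hn]; [|contradiction].
    destruct Hx as [Hx|Hx]; [contradiction|]. rewrite Hx. ring.
  - destruct (in_dec literal_eq_dec (i, true) p) as [Ht|_]; [exfalso; exact (Hc i Ht Hin)|].
    destruct (in_dec literal_eq_dec (i, false) p) as [_|Hn]; [|contradiction].
    destruct Hx as [Hx|Hx]; [|contradiction]. rewrite Hx. ring.
Qed.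

Section RuleModel.

Variables (d : nat) (theta : R) (rules : list rule).
Hypothesis theta_nonneg : 0 <= theta.
Hypothesis rules_wf : forall r, In r rules -> well_formed_rule d theta r.

Lemma activation_rule_model (j : nat) (x : nat -> R) :
  activation d (rule_model rules) j x =
  fcf (1 :: map (fun i => lit_weight (premise (nth j rules default_rule)) i * x i) (seq 0 d)).
Proof. reflexivity. Qed.

Lemma activation_matched (j : nat) (x : nat -> R) :
  matches x (nth j rules default_rule) -> activation d (rule_model rules) j x = 1.
Proof.
  intros Hm. rewrite activation_rule_model.
  apply fcf_In_1_nonneg; [left; reflexivity|].
  intros a [<-|Ha]; [lra|].
  apply in_map_iff in Ha as [i [<- _]]. exact (lit_weight_mul_nonneg x _ i Hm).
Qed.

Lemma activation_unmatched (j : nat) (x : nat -> R) :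
  bipolar d x -> (j < length rules)%nat ->
  consistent (premise (nth j rules default_rule)) ->
  ~ matches x (nth j rules default_rule) ->
  activation d (rule_model rules) j x = 0.
Proof.
  intros Hx Hj Hc Hm.
  destruct (rules_wf _ (nth_In rules default_rule Hj)) as [_ [Hidx _]].
  apply (Exists_Forall_neg _ _ (fun l => classic _)) in Hm.
  apply Exists_exists in Hm as [[i b] [Hin Hviol]].
  assert (Hi : (i < d)%nat) by (rewrite Forall_forall in Hidx; exact (Hidx _ Hin)).
  rewrite activation_rule_model.
  apply fcf_In_1_In_m1; [left; reflexivity|]. right.
  apply in_map_iff. exists i. split; [|apply in_seq; lia].
  exact (lit_weight_mul_violated x _ i b Hc Hin (Hx i Hi) Hviol).
Qed.

Lemma influence_matched (j : nat) (x : nat -> R) :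
  matches x (nth j rules default_rule) ->
  influence d (rule_model rules) j x = cf (nth j rules default_rule).
Proof.
  intros Hm. unfold influence. rewrite activation_matched by exact Hm. cbn [u rule_model].
  destruct excluded_middle_informative as [_|Hn]; [ring|].
  exfalso. exact (Hn (matches_consistent _ _ Hm)).
Qed.

Lemma influence_unmatched (j : nat) (x : nat -> R) :
  bipolar d x -> (j < length rules)%nat ->
  ~ matches x (nth j rules default_rule) -> influence d (rule_model rules) j x = 0.
Proof.
  intros Hx Hj Hm. unfold influence. cbn [u rule_model].
  destruct excluded_middle_informative as [Hc|_]; [|ring].
  rewrite activation_unmatched by assumption. ring.
Qed.

Lemma influence_unit_interval (j : nat) (x : nat -> R) :
  bipolar d x -> (j < length rules)%nat -> 0 <= influence d (rule_model rules) j x <= 1.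
Proof.
  intros Hx Hj.
  destruct (classic (matches x (nth j rules default_rule))) as [Hm|Hm].
  - rewrite influence_matched by exact Hm.
    destruct (rules_wf _ (nth_In rules default_rule Hj)) as [_ [_ Hcf]]. lra.
  - rewrite influence_unmatched by assumption. lra.
Qed.

Lemma rule_model_valid : valid_model (length rules) d (rule_model rules).
Proof.
  intros j Hj. cbn. split; [|split; [lra|intros i _; apply lit_weight_range]].
  destruct (rules_wf _ (nth_In rules default_rule Hj)) as [_ [_ Hcf]].
  destruct excluded_middle_informative; lra.
Qed.

Lemma In_influences (x : nat -> R) (a : R) :
  In a (map (fun j => influence d (rule_model rules) j x) (seq 0 (length rules))) ->
  exists j, (j < length rules)%nat /\ a = influence d (rule_model rules) j x.
Proof.
  intros Ha. apply in_map_iff in Ha as [j [<- Hj]]. apply in_seq in Hj.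
  exists j. split; [lia | reflexivity].
Qed.

Lemma M_out_matched (x : nat -> R) :
  bipolar d x -> (exists r, In r rules /\ matches x r) ->
  M_out (length rules) d (rule_model rules) x > theta.
Proof.
  intros Hx [r [Hr Hm]].
  destruct (In_nth rules r default_rule Hr) as [j [Hj Ej]].
  destruct (rules_wf r Hr) as [_ [_ Hcf]].
  assert (Hle : cf r <= M_out (length rules) d (rule_model rules) x).
  { apply fcf_ge_In.
    - intros a Ha. apply In_influences in Ha as [j' [Hj' ->]].
      exact (influence_unit_interval j' x Hx Hj').
    - apply in_map_iff. exists j. split; [|apply in_seq; lia].
      rewrite <- Ej in Hm |- *. exact (influence_matched j x Hm). }
  lra.
Qed.

Lemma M_out_unmatched (x : nat -> R) :
  bipolar d x -> ~ (exists r, In r rules /\ matches x r) ->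
  M_out (length rules) d (rule_model rules) x = 0.
Proof.
  intros Hx Hn. apply fcf_all_0. intros a Ha.
  apply In_influences in Ha as [j [Hj ->]].
  apply influence_unmatched; [exact Hx | exact Hj|].
  intros Hm. apply Hn. exists (nth j rules default_rule). split; [|exact Hm].
  exact (nth_In rules default_rule Hj).
Qed.

End RuleModel.

Theorem theorem2 (d : nat) (theta : R) (rules : list rule) :
  (1 <= d)%nat ->
  0 <= theta <= 1 ->
  rules <> [] ->
  (forall r, In r rules -> well_formed_rule d theta r) ->
  exists m : model,
    valid_model (length rules) d m /\
    forall x : nat -> R, bipolar d x ->
      ((exists r, In r rules /\ matches x r) -> M_out (length rules) d m x > theta) /\
      (~ (exists r, In r rules /\ matches x r) -> M_out (length rules) d m x = 0).
Proof.
  intros _ [Htheta _] _ Hwf. exists (rule_model rules). split.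
  - exact (rule_model_valid d theta rules Htheta Hwf).
  - intros x Hx. split.
    + exact (M_out_matched d theta rules Htheta Hwf x Hx).
    + exact (M_out_unmatched d theta rules Hwf x Hx).
Qed.
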